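(* For all $n\in\mathbb{N}$ and $q\ge 2$, $\kappa_{n,q}\ge \lfloor n/2\rfloor$.
   Context: Let $q\ge 2$, $A=\{0,1,\dots,q-1\}$, $[n]=\{1,\dots,n\}$, and let $F(n,q)$ be the set of all maps $A^n\to A^n$. For $f\in F(m,q)$ and $i\in[m]$, $f_i$ is the $i$-th coordinate function and $f^i(x)=(x_1,\dots,x_{i-1},f_i(x),x_{i+1},\dots,x_m)$; for a word $w=(w_1,\dots,w_t)$ over $[m]$, $f^w=f^{w_t}\circ\cdots\circ f^{w_1}$. $\Pi([m])$ is the set of permutations of $[m]$ written as words $(w_1,\dots,w_m)$; $w(i)$ is the position of $i$ in $w$. $\mathrm{pr}_{[n]}:A^m\to A^n$ is the projection onto the first $n$ coordinates. For $m\ge n$, $(f,w)$ with $f\in F(m,q)$, $w\in\Pi([m])$ sequentializes $h\in F(n,q)$ if $\mathrm{pr}_{[n]}\circ f^w=h\circ\mathrm{pr}_{[n]}$. For $u\in\Pi([n])$, $w\in\Pi([m])$ respects $u$ if for all $i,j\in[n]$, $u(i)<u(j)$ implies $w(i)<w(j)$. $\kappa(h,u)$ is the smallest $k\ge0$ such that some $f\in F(n+k,q)$ and $w\in\Pi([n+k])$ respecting $u$ sequentialize $h$. Finally $\kappa_{n,q}=\max\{\kappa(h,u): h\in F(n,q),\ u\in\Pi([n])\}$. *)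

From mathcomp Require Import all_boot.
From Stdlib Require Import ClassicalEpsilon.

Set Implicit Arguments.
Unset Strict Implicit.
Unset Printing Implicit Defensive.

(* Alphabet A = {0,..,q-1} is 'I_q; coordinates [m] = {1..m} are 'I_m (0-based). *)
Definition pt (m q : nat) := {ffun 'I_m -> 'I_q}.

Definition Fmap (m q : nat) := {ffun pt m q -> pt m q}.

Definition upd m q (f : Fmap m q) (i : 'I_m) (x : pt m q) : pt m q :=
  [ffun j => if j == i then f x i else x j].

(* f^w = f^{w_t} o ... o f^{w_1}  (w_1 applied first). *)
Definition fword m q (f : Fmap m q) (w : seq 'I_m) (x : pt m q) : pt m q :=
  foldl (fun y i => upd f i y) x w.

Definition pr n k q (x : pt (n + k) q) : pt n q := [ffun i => x (lshift k i)].

Definition respects n k (u : n.-tuple 'I_n) (w : (n + k).-tuple 'I_(n + k)) : bool :=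
  [forall i : 'I_n, forall j : 'I_n,
     (index i u < index j u) ==> (index (lshift k i) w < index (lshift k j) w)].

Definition sequentializes n k q (f : Fmap (n + k) q) (w : seq 'I_(n + k))
    (h : Fmap n q) : bool :=
  [forall x : pt (n + k) q, pr (fword f w x) == h (pr x)].

(* some f in F(n+k,q) and permutation word w of [n+k] respecting u sequentialize h;
   permutation words of [m] are the uniq m-tuples over 'I_m *)
Definition seqb n q (h : Fmap n q) (u : n.-tuple 'I_n) (k : nat) : bool :=
  [exists f : Fmap (n + k) q, exists w : (n + k).-tuple 'I_(n + k),
     [&& uniq w, respects u w & sequentializes f w h]].

(* kappa(h,u): the least such k (0 if none exists; it always exists, e.g. k = n). *)
Definition kappa n q (h : Fmap n q) (u : n.-tuple 'I_n) : nat :=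
  match excluded_middle_informative (exists k, seqb h u k) with
  | left e => ex_minn e
  | right _ => 0
  end.

Definition kappa_nq (n q : nat) : nat :=
  \max_(h : Fmap n q) \max_(u : n.-tuple 'I_n | uniq u) kappa h u.

From mathcomp Require Import all_boot zify.
From Stdlib Require Import ClassicalEpsilon.

(* Take h to be the reversal x |-> (x_n, ..., x_1) and u the identity order.
   Let w1 be the prefix of w ending with the update of coordinate n/2.  After
   w1 the first n/2 coordinates already hold their final values, which are
   copies of the last n/2 inputs, while the other original coordinates are
   still untouched.  Feeding inputs whose second half is constant, the whole
   state after w1 is therefore determined by the k extra coordinates, yet the
   output still recovers the first n/2 inputs.  Hence q^(n/2) <= q^k.  The
   upper bound needed for kappa to be a genuine minimum comes from copying the
   input into n fresh registers and then computing h from the copy. *)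

Set Implicit Arguments.
Unset Strict Implicit.
Unset Printing Implicit Defensive.

Lemma split_lshift m n (i : 'I_m) : split (lshift n i) = inl i.
Proof. exact: (unsplitK (inl _ i)). Qed.

Lemma split_rshift m n (j : 'I_n) : split (rshift m j) = inr j.
Proof. exact: (unsplitK (inr _ j)). Qed.

Lemma fword_cat m q (f : Fmap m q) s1 s2 x :
  fword f (s1 ++ s2) x = fword f s2 (fword f s1 x).
Proof. by rewrite /fword foldl_cat. Qed.

Lemma fword_notin m q (f : Fmap m q) (s : seq 'I_m) x c :
  c \notin s -> fword f s x c = x c.
Proof.
elim: s x => [|a s IHs] x //; rewrite inE negb_or => /andP[/negbTE ca cs].
by rewrite [fword _ _ _]/= IHs // ffunE ca.
Qed.

Lemma fword_parallel m q (f : Fmap m q) (s : seq 'I_m) x :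
  uniq s ->
  (forall c, c \in s -> forall y y' : pt m q,
     (forall d, d \notin s -> y d = y' d) -> f y c = f y' c) ->
  forall c, fword f s x c = if c \in s then f x c else x c.
Proof.
elim: s x => [|a s IHs] x //= /andP[_ us] local c.
have local_s : forall c, c \in s -> forall y y' : pt m q,
    (forall d, d \notin s -> y d = y' d) -> f y c = f y' c.
  move=> c' c's y y' yy'; apply: local; first by rewrite inE c's orbT.
  by move=> d; rewrite inE negb_or => /andP[_]; apply: yy'.
rewrite IHs // inE; case: ifP => cs.
  rewrite orbT; apply: local; first by rewrite inE cs orbT.
  by move=> d; rewrite inE negb_or ffunE => /andP[/negbTE ->].
by rewrite orbF ffunE; case: eqP => [->|].
Qed.

Lemma mem_uniq_ord_tuple m (w : m.-tuple 'I_m) c : uniq w -> c \in w.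
Proof.
move=> uw; apply/negPn/negP => cw.
have : size (c :: w) <= size (enum 'I_m).
  by apply: uniq_leq_size => [|d _]; rewrite ?mem_enum //= cw uw.
by rewrite /= size_tuple size_enum_ord ltnn.
Qed.

Lemma respects_ord_tuple n k (w : (n + k).-tuple 'I_(n + k)) (i j : 'I_n) :
  respects (ord_tuple n) w -> i < j -> index (lshift k i) w < index (lshift k j) w.
Proof.
move=> /forallP/(_ i)/forallP/(_ j)/implyP.
by rewrite /= !index_enum_ord.
Qed.

Lemma card_pt_inj m k q (G : pt m q -> pt k q) : 1 < q -> injective G -> m <= k.
Proof. by move=> hq /leq_card; rewrite !card_ffun !card_ord leq_exp2l. Qed.

Section Copy.

Variables (n q : nat) (h : Fmap n q).

Definition copy_then_apply : Fmap (n + n) q :=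
  [ffun y : pt (n + n) q => [ffun c : 'I_(n + n) => match split c with
                        | inl i => h [ffun j => y (rshift n j)] i
                        | inr j => y (lshift n j)
                        end]].

Definition copy_word (u : seq 'I_n) : seq 'I_(n + n) :=
  map (@rshift n n) (enum 'I_n) ++ map (@lshift n n) u.

Lemma size_copy_word (u : n.-tuple 'I_n) : size (copy_word u) == n + n.
Proof. by rewrite size_cat !size_map -enumT size_enum_ord size_tuple. Qed.

Lemma seqb_copy (u : n.-tuple 'I_n) : uniq u -> seqb h u n.
Proof.
move=> uu; apply/existsP; exists copy_then_apply.
apply/existsP; exists (Tuple (size_copy_word u)).
have notin_r (i : 'I_n) : lshift n i \notin map (@rshift n n) (enum 'I_n).
  by apply/mapP => -[j _ /eqP]; rewrite eq_lrshift.
have notin_l (j : 'I_n) : rshift n j \notin map (@lshift n n) u.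
  by apply/mapP => -[i _ /eqP]; rewrite eq_rlshift.
have uniq_r : uniq (map (@rshift n n) (enum 'I_n)).
  by rewrite map_inj_uniq ?enum_uniq //; apply: rshift_inj.
have uniq_l : uniq (map (@lshift n n) u) by rewrite map_inj_uniq //; apply: lshift_inj.
apply/and3P; split.
- rewrite /= cat_uniq uniq_r uniq_l andbT.
  by apply/hasP => -[c /mapP[i _ ->]]; apply/negP.
- apply/forallP => i; apply/forallP => j; apply/implyP => ij.
  rewrite /= !index_cat (negbTE (notin_r i)) (negbTE (notin_r j)).
  by rewrite !index_map ?ltn_add2l //; apply: lshift_inj.
- apply/forallP => x; apply/eqP/ffunP => i.
  rewrite ffunE fword_cat fword_parallel //; last first.
    move=> _ /mapP[j _ ->] y y' yy'; rewrite !ffunE split_lshift.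
    by congr (h _ _); apply/ffunP => j'; rewrite !ffunE; apply/yy'/notin_l.
  rewrite map_f ?mem_uniq_ord_tuple // !ffunE split_lshift; congr (h _ _); apply/ffunP => j.
  rewrite !ffunE fword_parallel //; last first.
    by move=> _ /mapP[j' _ ->] y y' yy'; rewrite !ffunE split_rshift; apply/yy'/notin_r.
  by rewrite map_f ?mem_enum // !ffunE split_rshift.
Qed.

End Copy.

Lemma leq_kappa n q (h : Fmap n q) (u : n.-tuple 'I_n) b :
  uniq u -> (forall k, seqb h u k -> b <= k) -> b <= kappa h u.
Proof.
move=> uu lb; rewrite /kappa; case: excluded_middle_informative => [ex|[]].
  by case: (ex_minnP ex) => k /lb.
by exists n; apply: seqb_copy.
Qed.

Lemma kappa_le_kappa_nq n q (h : Fmap n q) (u : n.-tuple 'I_n) :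
  uniq u -> kappa h u <= kappa_nq n q.
Proof.
by move=> uu; apply: leq_trans (leq_bigmax h); apply: (leq_bigmax_cond u).
Qed.

Definition rev_map n q : Fmap n q := [ffun x : pt n q => [ffun i => x (rev_ord i)]].

Section ReversalLowerBound.

Variables (n k q : nat) (f : Fmap (n + k) q) (w : (n + k).-tuple 'I_(n + k)).
Hypotheses (hq : 1 < q) (uw : uniq w) (rw : respects (ord_tuple n) w).
Hypothesis sw : sequentializes f w (rev_map n q).

Lemma fword_rev x (i : 'I_n) : fword f w x (lshift k i) = x (lshift k (rev_ord i)).
Proof. by move/forallP/(_ x)/eqP/ffunP/(_ i): sw; rewrite !ffunE. Qed.

Section Prefix.

Variable i0 : 'I_n.

Let p := index (lshift k i0) w.
Let w1 := take p.+1 w.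
Let w2 := drop p.+1 w.

Lemma mem_prefix (i : 'I_n) : (lshift k i \in w1) = (i <= i0).
Proof.
rewrite in_take ?mem_uniq_ord_tuple // ltnS.
case: (ltngtP i i0) => [lt|gt|/val_inj ->].
- by apply/ltnW/respects_ord_tuple.
- by apply/negbTE; rewrite -ltnNge; apply: respects_ord_tuple.
- by rewrite leqnn.
Qed.

Lemma notin_suffix (i : 'I_n) : i <= i0 -> lshift k i \notin w2.
Proof.
rewrite -mem_prefix => iw1; apply/negP => iw2.
move: uw; rewrite -(cat_take_drop p.+1 w) cat_uniq => /and3P[_ /hasP[]].
by exists (lshift k i).
Qed.

Lemma fword_prefix x : fword f w x = fword f w2 (fword f w1 x).
Proof. by rewrite -fword_cat cat_take_drop. Qed.

(* Coordinates up to i0 are not updated again after the prefix. *)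
Lemma fword_prefix_rev x (i : 'I_n) :
  i <= i0 -> fword f w1 x (lshift k i) = x (lshift k (rev_ord i)).
Proof.
by move=> ii0; rewrite -(fword_notin f _ (notin_suffix ii0)) -fword_prefix fword_rev.
Qed.

End Prefix.

Let m := n./2.

Lemma half_double_leq : m + m <= n.
Proof. by rewrite addnn -[leqRHS](odd_double_half n) leq_addl. Qed.

Let m_le_n : m <= n. Proof. by have := half_double_leq; lia. Qed.

Variable z0 : 'I_q.

Definition pad (a : pt m q) : pt (n + k) q :=
  [ffun c => if insub (val c) is Some j then a j else z0].

Lemma pad_widen a (j : 'I_m) : pad a (lshift k (widen_ord m_le_n j)) = a j.
Proof.
rewrite ffunE; case: insubP => [j' _ /= jj'|/=]; last by rewrite ltn_ord.
by congr (a _); apply: val_inj.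
Qed.

Lemma pad_high a (c : 'I_(n + k)) : m <= c -> pad a c = z0.
Proof. by rewrite ffunE => mc; case: insubP => // j'; rewrite ltnNge mc. Qed.

Lemma lower_bound : m <= k.
Proof.
case: (posnP m) => [->|m_gt0] //.
have lt_i0 : m.-1 < n by lia.
pose i0 := Ordinal lt_i0.
pose state a := fword f (take (index (lshift k i0) w).+1 w) (pad a).
have state_low a (i : 'I_n) : state a (lshift k i) = z0.
  have [ii0|i0i] := leqP i i0.
    by rewrite fword_prefix_rev // pad_high //=; move: ii0 half_double_leq => /=; lia.
  rewrite fword_notin ?mem_prefix -?ltnNge // pad_high //=; move: i0i => /=; lia.
pose G a : pt k q := [ffun j => state a (rshift n j)].
apply: (card_pt_inj (G := G)) => // a a' Gaa'.
have state_eq : state a = state a'.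
  apply/ffunP => c; case: (splitP c) => [i ci|j cj].
    have -> : c = lshift k i by apply: val_inj.
    by rewrite !state_low.
  have -> : c = rshift n j by apply: val_inj.
  by move/ffunP/(_ j): Gaa'; rewrite !ffunE.
apply/ffunP => j; rewrite -!(pad_widen _ j) -[widen_ord _ _]rev_ordK.
by rewrite -!fword_rev !(fword_prefix i0) -/(state a) -/(state a') state_eq.
Qed.

End ReversalLowerBound.

Theorem mainTheorem2 (n q : nat) (hq : 2 <= q) : n./2 <= kappa_nq n q.
Proof.
have uid : uniq (ord_tuple n) by apply: enum_uniq.
apply: leq_trans (kappa_le_kappa_nq (rev_map n q) uid).
apply: leq_kappa => // k /existsP[f /existsP[w /and3P[uw rw sw]]].
exact: lower_bound hq uw rw sw (Ordinal (ltnW hq)).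
Qed.
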